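(* Every interbank lending game $G=(m,n,\boldsymbol{c},\boldsymbol{d},r_{\max},r_{\min})$ has a unique pure Nash equilibrium.
   Context: An interbank lending game $G=(m,n,\boldsymbol{c},\boldsymbol{d},r_{\max},r_{\min})$ consists of positive integers $m,n$, budgets $\boldsymbol{c}\in\mathbb{R}_{>0}^m$, demands $\boldsymbol{d}\in\mathbb{R}_{>0}^n$ and reals $0<r_{\min}<r_{\max}$. The players are the lenders $L=\{1,\dots,m\}$; $B=\{1,\dots,n\}$ is the set of borrowers. Lender $i$'s strategy set is $S_i=\{s_i\in\mathbb{R}_{\ge0}^n:\sum_{j\in B}s_{ij}\le c_i\}$, the strategy space is $\boldsymbol{S}=\prod_{i\in L}S_i$ with elements $\boldsymbol{s}=(s_{ij})_{i\in L,j\in B}$. The interest rate of borrower $j$ is $r_j(\boldsymbol{s})=(r_{\min}-r_{\max})\frac{\sum_{i\in L}s_{ij}}{d_j}+r_{\max}$ and lender $i$'s utility is $u_i(\boldsymbol{s})=\sum_{j\in B}(r_j(\boldsymbol{s})-r_{\min})s_{ij}$. A pure Nash equilibrium is a profile $\boldsymbol{s}^*\in\boldsymbol{S}$ such that $u_i(\boldsymbol{s}^* )\ge u_i(s_i,\boldsymbol{s}^*_{-i})$ for every $i\in L$ and every $s_i\in S_i$, where $(s_i,\boldsymbol{s}^*_{-i})$ denotes $\boldsymbol{s}^*$ with lender $i$'s strategy replaced by $s_i$. *)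

From HB Require Import structures.
From mathcomp Require Import all_boot all_order all_algebra.
From mathcomp Require Import reals.
Set Implicit Arguments. Unset Strict Implicit. Unset Printing Implicit Defensive.
Import Order.TTheory GRing.Theory Num.Theory.
Local Open Scope ring_scope.

(* Interbank lending game G = (m, n, c, d, rmax, rmin): lenders 'I_m,
   borrowers 'I_n. A strategy profile is s : 'M[R]_(m, n), where s i j is
   the amount lender i lends to borrower j. *)

Definition feasible_row (R : realType) (n : nat) (ci : R) (si : 'I_n -> R) : Prop :=
  (forall j, 0 <= si j) /\ \sum_(j < n) si j <= ci.

Definition feasible (R : realType) (m n : nat) (c : 'I_m -> R) (s : 'M[R]_(m, n)) : Prop :=
  forall i, feasible_row (c i) (fun j => s i j).

Definition rate (R : realType) (m n : nat) (d : 'I_n -> R) (rmax rmin : R)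
  (s : 'M[R]_(m, n)) (j : 'I_n) : R :=
  (rmin - rmax) * ((\sum_(i < m) s i j) / d j) + rmax.

Definition utility (R : realType) (m n : nat) (d : 'I_n -> R) (rmax rmin : R)
  (s : 'M[R]_(m, n)) (i : 'I_m) : R :=
  \sum_(j < n) (rate d rmax rmin s j - rmin) * s i j.

Definition deviate (R : realType) (m n : nat) (s : 'M[R]_(m, n)) (i : 'I_m)
  (si : 'I_n -> R) : 'M[R]_(m, n) :=
  \matrix_(k, j) if k == i then si j else s k j.

Definition pure_NE (R : realType) (m n : nat) (c : 'I_m -> R) (d : 'I_n -> R)
  (rmax rmin : R) (s : 'M[R]_(m, n)) : Prop :=
  feasible c s /\
  forall (i : 'I_m) (si : 'I_n -> R), feasible_row (c i) si ->
    utility d rmax rmin (deviate s i si) i <= utility d rmax rmin s i.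

From HB Require Import structures.
From mathcomp Require Import all_boot all_order all_algebra.
From mathcomp Require Import reals classical_sets topology normedtype derive.
From mathcomp Require Import ring lra.
Set Implicit Arguments. Unset Strict Implicit. Unset Printing Implicit Defensive.
Import Order.TTheory GRing.Theory Num.Theory.
Import numFieldNormedType.Exports.
Local Open Scope ring_scope.

(* The game is an exact potential game: changing lender i's row changes its
   utility by (rmax - rmin) times the change of the concave quadratic
   potential  P(s) = sum_j (S_j - (S_j^2 + sum_i s_ij^2) / (2 d_j)),  where
   S_j is the total amount lent to borrower j.  So the Nash equilibria are the
   feasible profiles whose rows each maximise P with the other rows fixed.  A
   global maximiser of P over the compact feasible set is one of them.  If s
   and t are two, moving a row of s a quarter of the way towards t (and vice
   versa) bounds the first-order variation of P by its second-order one;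
   summing over rows and over both profiles leaves
   sum_j (S_j(t) - S_j(s))^2 / d_j + 1/2 sum_ij (t_ij - s_ij)^2 / d_j <= 0. *)

Section matrix_topology.
Local Open Scope classical_set_scope.
Context {R : realType} {m n : nat}.

Lemma vec_mx_continuous :
  continuous (fun v : 'rV[R]_(m * n) => vec_mx v : 'M[R]_(m, n)).
Proof.
move=> v A /nbhs_ballP [e e_gt0 eA]; apply/nbhs_ballP; exists e => // w [_ vw].
by apply: eA; split => // i j; rewrite !mxE; exact: vw.
Qed.

Lemma mx_box_compact (K : set R) : compact K ->
  compact [set M : 'M[R]_(m, n) | forall i j, K (M i j)].
Proof.
move=> K_compact.
have -> : [set M : 'M[R]_(m, n) | forall i j, K (M i j)] =
    vec_mx @` [set v : 'rV[R]_(m * n) | forall k, K (v ord0 k)].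
  apply/seteqP; split => [M KM | _ [v Kv <-] i j]; last by rewrite mxE.
  exists (mxvec M); last exact: mxvecK.
  by move=> k; case/mxvec_indexP: k => i j; rewrite mxvecE.
apply: continuous_compact; last exact: (@rV_compact _ _ (fun=> K)).
exact/continuous_subspaceT/vec_mx_continuous.
Qed.

Lemma col_sum_continuous (f : R -> R) (j : 'I_n) : continuous f ->
  continuous (fun s : 'M[R]_(m, n) => \sum_i f (s i j)).
Proof.
move=> f_cont; apply: continuous_big => [|i _ s]; first exact: add_continuous.
by apply: continuous_comp; [exact: coord_continuous | exact: f_cont].
Qed.

Lemma row_sum_continuous (i : 'I_m) :
  continuous (fun s : 'M[R]_(m, n) => \sum_j s i j).
Proof.
apply: continuous_big => [|j _]; first exact: add_continuous.
exact: coord_continuous.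
Qed.
End matrix_topology.

Section feasible_set.
Local Open Scope classical_set_scope.
Variables (R : realType) (m n : nat) (c : 'I_m -> R).
Hypothesis c_ge0 : forall i, 0 <= c i.

Lemma feasible_closed : closed [set s : 'M[R]_(m, n) | feasible c s].
Proof.
have -> : [set s : 'M[R]_(m, n) | feasible c s] = \bigcap_i
    ((\bigcap_j [set s | 0 <= s i j]) `&` [set s | \sum_j s i j <= c i]).
  apply/seteqP; split => [s fs i _ | s fs i].
    by have [s_ge0 s_le] := fs i; split => // j _; exact: s_ge0.
  by have [s_ge0 s_le] := fs i I; split => // j; exact: s_ge0.
apply: closed_bigI => i _; apply: closedI.
  apply: closed_bigI => j _.
  apply: (@preimage_closed _ _ (fun s : 'M[R]_(m, n) => s i j) [set x | 0 <= x]).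
    by move=> s _; exact: coord_continuous.
  exact: closed_ge.
apply: (@preimage_closed _ _ (fun s : 'M[R]_(m, n) => \sum_j s i j)
  [set x | x <= c i]).
  by move=> s _; exact: row_sum_continuous.
exact: closed_le.
Qed.

Lemma feasible_compact : compact [set s : 'M[R]_(m, n) | feasible c s].
Proof.
have box :=
  mx_box_compact (m := m) (n := n) (@segment_compact _ 0 (\sum_i c i)).
apply: (subclosed_compact feasible_closed box).
move=> s fs i j; have [s_ge0 s_le] := fs i.
rewrite /= in_itv /= s_ge0 /=.
apply: le_trans (le_trans s_le _).
  by rewrite (bigD1 j) //= lerDl sumr_ge0.
by rewrite (bigD1 i) //= lerDl sumr_ge0.
Qed.

Lemma feasible_argmax (F : 'M[R]_(m, n) -> R) : continuous F ->
  exists2 s, feasible c s & forall t, feasible c t -> F t <= F s.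
Proof.
move=> F_cont.
have feasible0 : [set s : 'M[R]_(m, n) | feasible c s] !=set0.
  exists 0 => i; split => [j|]; first by rewrite mxE.
  by rewrite big1 // => j _; rewrite mxE.
have [s fs s_max] :=
  compact_EVT_max feasible0 feasible_compact (continuous_subspaceT F_cont).
by exists s => [|t ft]; [rewrite inE in fs | apply: s_max; rewrite inE].
Qed.
End feasible_set.

Section deviation.
Context {R : realType} {m n : nat}.
Implicit Types (s : 'M[R]_(m, n)) (i : 'I_m) (x : 'I_n -> R).

Lemma deviate_id s i : deviate s i (fun j => s i j) = s.
Proof. by apply/matrixP => k j; rewrite mxE; case: eqP => // ->. Qed.

Lemma sum_deviate_col (f : R -> R) s i x j :
  \sum_k f (deviate s i x k j) = \sum_k f (s k j) - f (s i j) + f (x j).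
Proof.
rewrite [LHS](bigD1 i) // [X in _ = X - _ + _](bigD1 i) //= mxE eqxx.
have -> : \sum_(k | k != i) f (deviate s i x k j) = \sum_(k | k != i) f (s k j).
  by apply: eq_bigr => k /negPf ki; rewrite mxE ki.
ring.
Qed.

Lemma feasible_row_convex (ci : R) x y (t : R) :
  feasible_row ci x -> feasible_row ci y -> 0 <= t <= 1 ->
  feasible_row ci (fun j => x j + t * (y j - x j)).
Proof.
move=> [x_ge0 x_le] [y_ge0 y_le] /andP [t_ge0 t_le1]; split => [j|].
  have := x_ge0 j; have := y_ge0 j; nra.
rewrite big_split /= -mulr_sumr sumrB; nra.
Qed.

Lemma feasible_deviate (c : 'I_m -> R) s i x :
  feasible c s -> feasible_row (c i) x -> feasible c (deviate s i x).
Proof.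
move=> fs [x_ge0 x_le] k; case: (eqVneq k i) => [->|ki].
  by split => [j|]; [rewrite mxE eqxx | under eq_bigr do rewrite mxE eqxx].
have [s_ge0 s_le] := fs k.
split => [j|]; first by rewrite mxE (negPf ki).
by under eq_bigr do rewrite mxE (negPf ki).
Qed.
End deviation.

Section potential.
Variables (R : realType) (m n : nat) (d : 'I_n -> R).
Hypothesis d_gt0 : forall j, 0 < d j.
Implicit Types (s t : 'M[R]_(m, n)) (i : 'I_m) (x y : 'I_n -> R) (c : 'I_m -> R).

Definition load s j := \sum_i s i j.

Definition potential s :=
  \sum_j (load s j - (load s j ^+ 2 + \sum_i s i j ^+ 2) / (2 * d j)).

Lemma potential_continuous : continuous potential.
Proof.
have sqr_cont : continuous (fun v : R => v ^+ 2) by move=> v; exact: continuousM.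
apply: continuous_big => [|j _ s]; first exact: add_continuous.
have load_cont : continuous (load ^~ j) :=
  col_sum_continuous (f := id) (fun v => cvg_id).
have sum_sqr_cont : continuous (fun s => \sum_i s i j ^+ 2) :=
  col_sum_continuous sqr_cont.
have sqr_load_cont : continuous (fun s => load s j ^+ 2).
  by move=> t; exact: (continuous_comp (load_cont t) (sqr_cont _)).
exact: (continuousB (load_cont s) (continuousM
  (continuousD (sqr_load_cont s) (sum_sqr_cont s)) (@cst_continuous _ _ _ s))).
Qed.

(* The partial derivative of [potential] in the entry [s i j]. *)
Definition marginal s i j := 1 - (load s j + s i j) / d j.

Let d_neq0 j : d j != 0. Proof. by rewrite gt_eqF. Qed.

Lemma utility_deviateB rmax rmin s i x y :
  utility d rmax rmin (deviate s i x) i - utility d rmax rmin (deviate s i y) i =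
  (rmax - rmin) * (potential (deviate s i x) - potential (deviate s i y)).
Proof.
rewrite /utility /potential /load -!sumrB mulr_sumr; apply: eq_bigr => j _.
rewrite /rate !(sum_deviate_col (fun v => v)).
rewrite !(sum_deviate_col (fun v => v ^+ 2)) !mxE !eqxx.
by field; apply: d_neq0.
Qed.

Lemma potential_deviate_shift s i y :
  potential (deviate s i (fun j => s i j + y j)) - potential s =
  \sum_j y j * marginal s i j - \sum_j y j ^+ 2 / d j.
Proof.
rewrite /potential /marginal /load -!sumrB; apply: eq_bigr => j _.
rewrite (sum_deviate_col (fun v => v)) (sum_deviate_col (fun v => v ^+ 2)).
by field; apply: d_neq0.
Qed.

Definition potential_rowmax c s :=
  forall i x, feasible_row (c i) x -> potential (deviate s i x) <= potential s.

Lemma pure_NE_potential c rmax rmin s : rmin < rmax ->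
  pure_NE c d rmax rmin s <-> feasible c s /\ potential_rowmax c s.
Proof.
move=> lt_rmin_rmax; have a_gt0 : 0 < rmax - rmin by rewrite subr_gt0.
have E i x : (utility d rmax rmin (deviate s i x) i <= utility d rmax rmin s i) =
    (potential (deviate s i x) <= potential s).
  have := utility_deviateB rmax rmin s i x (fun j => s i j).
  rewrite deviate_id => U.
  by rewrite -subr_le0 U pmulr_rle0 // subr_le0.
split=> -[fs s_max]; split=> // i x fx; first by rewrite -E; apply: s_max.
by rewrite E; apply: s_max.
Qed.

(* Any step below 1/2 towards t would do here; with the step 1/2,
   [potential_rowmax_unique] would only recover the loads. *)
Lemma rowmax_marginal_le c s t i : feasible c s -> feasible c t ->
  potential_rowmax c s ->
  \sum_j (t i j - s i j) * marginal s i j <=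
  4^-1 * \sum_j (t i j - s i j) ^+ 2 / d j.
Proof.
move=> fs ft s_max.
have fx : feasible_row (c i) (fun j => s i j + 4^-1 * (t i j - s i j)).
  by apply: feasible_row_convex; [exact: fs | exact: ft | lra].
have := s_max i _ fx; rewrite -subr_le0 potential_deviate_shift.
under eq_bigr do rewrite -mulrA.
under [X in _ - X]eq_bigr do rewrite exprMn -mulrA.
rewrite -!mulr_sumr; lra.
Qed.

Lemma sum_marginal_gap s t :
  \sum_i \sum_j (t i j - s i j) * (marginal s i j - marginal t i j) =
  \sum_j (load t j - load s j) ^+ 2 / d j +
  \sum_i \sum_j (t i j - s i j) ^+ 2 / d j.
Proof.
rewrite [in RHS]exchange_big -big_split exchange_big /=; apply: eq_bigr => j _.
have D : load t j - load s j = \sum_i (t i j - s i j) by rewrite sumrB.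
rewrite expr2 -mulrA {1}D mulr_suml -big_split /=.
by apply: eq_bigr => i _; rewrite /marginal; field; apply: d_neq0.
Qed.

Lemma weighted_sqr_sum_le0 (A : 'M[R]_(m, n)) :
  \sum_i \sum_j A i j ^+ 2 / d j <= 0 -> A = 0.
Proof.
move=> A_le0.
have term_ge0 i j : 0 <= A i j ^+ 2 / d j by rewrite divr_ge0 ?sqr_ge0 ?ltW.
have row_ge0 i : 0 <= \sum_j A i j ^+ 2 / d j by rewrite sumr_ge0.
have /(psumr_eq0P (fun i _ => row_ge0 i)) row_eq0 :
    \sum_i \sum_j A i j ^+ 2 / d j = 0.
  by apply/le_anti; rewrite A_le0 sumr_ge0.
apply/matrixP => i j; rewrite mxE.
have /eqP := psumr_eq0P (fun k _ => term_ge0 i k) (row_eq0 i isT) (i := j) isT.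
by rewrite mulf_eq0 invr_eq0 (negPf (d_neq0 j)) orbF sqrf_eq0 => /eqP.
Qed.

Lemma potential_rowmax_unique c s t : feasible c s -> feasible c t ->
  potential_rowmax c s -> potential_rowmax c t -> s = t.
Proof.
move=> fs ft s_max t_max.
pose W := \sum_i \sum_j (t i j - s i j) ^+ 2 / d j.
have gap_le :
    \sum_i \sum_j (t i j - s i j) * (marginal s i j - marginal t i j) <= 2^-1 * W.
  rewrite /W mulr_sumr; apply: ler_sum => i _.
  have sqr_sym :
      \sum_j (s i j - t i j) ^+ 2 / d j = \sum_j (t i j - s i j) ^+ 2 / d j.
    by apply: eq_bigr => j _; rewrite -opprB sqrrN.
  have := rowmax_marginal_le i fs ft s_max.
  have := rowmax_marginal_le i ft fs t_max; rewrite sqr_sym.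
  have -> : \sum_j (t i j - s i j) * (marginal s i j - marginal t i j) =
      \sum_j (t i j - s i j) * marginal s i j +
      \sum_j (s i j - t i j) * marginal t i j.
    by rewrite -big_split; apply: eq_bigr => j _ /=; ring.
  lra.
have V_ge0 : 0 <= \sum_j (load t j - load s j) ^+ 2 / d j.
  by rewrite sumr_ge0 // => j _; rewrite divr_ge0 ?sqr_ge0 ?ltW.
have W_le0 : \sum_i \sum_j (t - s) i j ^+ 2 / d j <= 0.
  under eq_bigr do under eq_bigr do rewrite !mxE.
  move: gap_le; rewrite sum_marginal_gap -/W; lra.
by apply/esym/subr0_eq; exact: weighted_sqr_sum_le0.
Qed.
End potential.

Theorem theorem3p3 (R : realType) (m n : nat) (c : 'I_m -> R) (d : 'I_n -> R)
  (rmax rmin : R) :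
  (0 < m)%N -> (0 < n)%N ->
  (forall i, 0 < c i) -> (forall j, 0 < d j) ->
  0 < rmin -> rmin < rmax ->
  exists! s : 'M[R]_(m, n), pure_NE c d rmax rmin s.
Proof.
move=> _ _ c_gt0 d_gt0 _ lt_rmin_rmax.
have NE_rowmax s := pure_NE_potential d_gt0 c s lt_rmin_rmax.
have [s fs s_argmax] :=
  feasible_argmax (fun i => ltW (c_gt0 i)) (potential_continuous (d := d)).
have s_rowmax : potential_rowmax d c s.
  by move=> i x fx; apply/s_argmax/feasible_deviate.
exists s; split; first exact/NE_rowmax.
move=> t /NE_rowmax [ft t_rowmax].
by have := potential_rowmax_unique d_gt0 fs ft s_rowmax t_rowmax.
Qed.
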